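(* Let $b\in\mathbb{C}$, let $M=\{r_1<|z|<r_2\}\subset\mathbb{C}-\{0\}$ with $0\le r_1<r_2\le+\infty$, and let $X=\Re\int\Phi:M\to\mathbb{R}^3$ where $\Phi_1=(1-\frac{b}{z^2})dz$, $\Phi_2=\imath(1+\frac{b}{z^2})dz$, $\Phi_3=\frac{dz}{z}$. Then $X$ is a complete immersion if and only if $M=\mathbb{C}-\{0\}$ and $b\notin(-\infty,0)\subset\mathbb{R}$.
   Context: $X$ is a well-defined harmonic map (its coordinates are harmonic). Complete immersion: $X$ is an immersion and the induced metric $X^*\langle,\rangle$ is complete. *)

From Stdlib Require Import Reals.
From Coquelicot Require Import Coquelicot.
Open Scope R_scope.

Definition annulus (r1 : R) (r2 : Rbar) (z : C) : Prop :=
  r1 < Cmod z /\ Rbar_lt (Cmod z) r2.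

(* Coefficients of the Weierstrass-type data: Phi_k = phi_k(z) dz. *)
Definition phi1 (b z : C) : C := (1 - b / (z * z))%C.
Definition phi2 (b z : C) : C := (Ci * (1 + b / (z * z)))%C.
Definition phi3 (z : C) : C := (/ z)%C.

(* X = (X1,X2,X3) is "Re of a primitive of Phi" on M:
   each X_k is (real-)differentiable at every z in M with differential
   dX_k(v) = Re (phi_k(z) v), i.e. dX_k = Re Phi_k. *)
Definition is_Re_primitive (r1 : R) (r2 : Rbar) (b : C)
  (X1 X2 X3 : C -> R) : Prop :=
  forall z, annulus r1 r2 z ->
    filterdiff (K := R_AbsRing) X1 (locally z) (fun v => Re (phi1 b z * v)%C) /\
    filterdiff (K := R_AbsRing) X2 (locally z) (fun v => Re (phi2 b z * v)%C) /\
    filterdiff (K := R_AbsRing) X3 (locally z) (fun v => Re (phi3 z * v)%C).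

Definition dX (X1 X2 X3 : C -> R) (p v : C) : R * R * R :=
  (Derive (fun t => X1 (p + RtoC t * v)%C) 0,
   Derive (fun t => X2 (p + RtoC t * v)%C) 0,
   Derive (fun t => X3 (p + RtoC t * v)%C) 0).

Definition is_immersion (r1 : R) (r2 : Rbar) (X1 X2 X3 : C -> R) : Prop :=
  forall p v, annulus r1 r2 p -> v <> 0%C -> dX X1 X2 X3 p v <> (0, 0, 0).

(* Admissible curves: C^1 maps gamma on [0,1] with values in M,
   joining p to q (gamma given on all of R, only [0,1] matters). *)
Definition admissible_curve (r1 : R) (r2 : Rbar) (p q : C) (g : R -> C) : Prop :=
  g 0 = p /\ g 1 = q /\
  (forall t, 0 <= t <= 1 -> annulus r1 r2 (g t)) /\
  (forall t, 0 <= t <= 1 ->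
     ex_derive (fun s => Re (g s)) t /\ ex_derive (fun s => Im (g s)) t /\
     continuous (Derive (fun s => Re (g s))) t /\
     continuous (Derive (fun s => Im (g s))) t).

(* Length of a curve for the induced metric X^*<,>: Euclidean length of X o g. *)
Definition induced_length (X1 X2 X3 : C -> R) (g : R -> C) : R :=
  RInt (fun t => sqrt (Rsqr (Derive (fun s => X1 (g s)) t)
                     + Rsqr (Derive (fun s => X2 (g s)) t)
                     + Rsqr (Derive (fun s => X3 (g s)) t))) 0 1.

Definition induced_dist (r1 : R) (r2 : Rbar) (X1 X2 X3 : C -> R) (p q : C) : Rbar :=
  Glb_Rbar (fun l => exists g, admissible_curve r1 r2 p q g /\
                               l = induced_length X1 X2 X3 g).

Definition induced_metric_complete (r1 : R) (r2 : Rbar) (X1 X2 X3 : C -> R) : Prop :=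
  forall u : nat -> C,
    (forall n, annulus r1 r2 (u n)) ->
    (forall eps, 0 < eps -> exists N, forall m n, (N <= m)%nat -> (N <= n)%nat ->
        Rbar_lt (induced_dist r1 r2 X1 X2 X3 (u m) (u n)) eps) ->
    exists p, annulus r1 r2 p /\
      (forall eps, 0 < eps -> exists N, forall n, (N <= n)%nat ->
        Rbar_lt (induced_dist r1 r2 X1 X2 X3 (u n) p) eps).

Definition complete_immersion (r1 : R) (r2 : Rbar) (X1 X2 X3 : C -> R) : Prop :=
  is_immersion r1 r2 X1 X2 X3 /\ induced_metric_complete r1 r2 X1 X2 X3.

From Stdlib Require Import Reals Lra Psatz.
From Coquelicot Require Import Coquelicot.
Open Scope R_scope.

(* The real parts prim1, prim2, prim3 of the primitives z + b/z, i (z - b/z) and log z of Phi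
   have, along every curve, the same derivatives as the coordinates of X, and these are bounded
   by the speed of X; so they are 1-Lipschitz for the induced distance. Conversely, the speed is
   at most a constant times the Euclidean speed away from 0, so short segments are short.
   If r1 > 0 or r2 < +oo, a radial sequence tending to the boundary is therefore Cauchy, while
   prim3 = log |z| forbids a limit inside M. On C - {0}, a Cauchy sequence makes the three
   primitives converge, and z is recovered from them by a 2x2 linear system whose determinant
   vanishes exactly when b = -|z|^2; the same condition is the one under which dX has a kernel. *)

(* Real and imaginary parts of [b * conj(z)^2], so that [b / z^2 = bconj2 / |z|^4]. *)
Definition bconj2_re (b1 b2 x y : R) := b1 * (x * x - y * y) + 2 * b2 * x * y.
Definition bconj2_im (b1 b2 x y : R) := b2 * (x * x - y * y) - 2 * b1 * x * y.

Definition Phi1_re (b1 b2 x y a c : R) :=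
  a - (bconj2_re b1 b2 x y * a - bconj2_im b1 b2 x y * c) / (x * x + y * y) ^ 2.
Definition Phi2_re (b1 b2 x y a c : R) :=
  - c - (bconj2_re b1 b2 x y * c + bconj2_im b1 b2 x y * a) / (x * x + y * y) ^ 2.
Definition Phi3_re (x y a c : R) := (a * x + c * y) / (x * x + y * y).

Definition Phi_norm (b1 b2 x y a c : R) :=
  sqrt (Rsqr (Phi1_re b1 b2 x y a c) + Rsqr (Phi2_re b1 b2 x y a c) + Rsqr (Phi3_re x y a c)).

(* Real parts of the primitives [z + b/z], [i (z - b/z)] and [log z] of [Phi]. *)
Definition prim1 (b1 b2 x y : R) := x + (b1 * x + b2 * y) / (x * x + y * y).
Definition prim2 (b1 b2 x y : R) := - y + (b2 * x - b1 * y) / (x * x + y * y).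
Definition prim3 (x y : R) := ln (x * x + y * y) / 2.

Lemma Re_phi1_mult b1 b2 x y a c : 0 < x * x + y * y ->
  Re (phi1 (b1, b2) (x, y) * (a, c))%C = Phi1_re b1 b2 x y a c.
Proof.
  intros Hr; unfold phi1, Phi1_re, bconj2_re, bconj2_im, Cdiv, Cminus, Cmult, Cinv, Cplus, Copp; simpl.
  field_simplify; [reflexivity | nra | nra].
Qed.

Lemma Re_phi2_mult b1 b2 x y a c : 0 < x * x + y * y ->
  Re (phi2 (b1, b2) (x, y) * (a, c))%C = Phi2_re b1 b2 x y a c.
Proof.
  intros Hr; unfold phi2, Phi2_re, bconj2_re, bconj2_im, Ci, Cdiv, Cmult, Cinv, Cplus; simpl.
  field_simplify; [reflexivity | nra | nra].
Qed.

Lemma Re_phi3_mult x y a c : 0 < x * x + y * y ->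
  Re (phi3 (x, y) * (a, c))%C = Phi3_re x y a c.
Proof.
  intros Hr; unfold phi3, Phi3_re, Cmult, Cinv; simpl.
  field_simplify; [reflexivity | nra | nra].
Qed.

Lemma Phi_re_le_norm b1 b2 x y a c :
  Rabs (Phi1_re b1 b2 x y a c) <= Phi_norm b1 b2 x y a c /\
  Rabs (Phi2_re b1 b2 x y a c) <= Phi_norm b1 b2 x y a c /\
  Rabs (Phi3_re x y a c) <= Phi_norm b1 b2 x y a c.
Proof.
  unfold Phi_norm.
  pose proof (Rle_0_sqr (Phi1_re b1 b2 x y a c)).
  pose proof (Rle_0_sqr (Phi2_re b1 b2 x y a c)).
  pose proof (Rle_0_sqr (Phi3_re x y a c)).
  split; [|split]; rewrite <- sqrt_Rsqr_abs; apply sqrt_le_1_alt; lra.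
Qed.

Section PrimitiveDerivatives.

Variables (xf yf : R -> R) (t a c : R).
Hypotheses (Hx : is_derive xf t a) (Hy : is_derive yf t c)
  (Hr : 0 < xf t * xf t + yf t * yf t).

Ltac derive_prim :=
  auto_derive; [repeat split; try (eexists; eassumption); lra |];
  replace (Derive (fun s => xf s) t) with a by (symmetry; exact (is_derive_unique _ _ _ Hx));
  replace (Derive (fun s => yf s) t) with c by (symmetry; exact (is_derive_unique _ _ _ Hy));
  unfold Phi1_re, Phi2_re, Phi3_re, bconj2_re, bconj2_im; field; lra.

Lemma is_derive_prim1 b1 b2 :
  is_derive (fun s => prim1 b1 b2 (xf s) (yf s)) t (Phi1_re b1 b2 (xf t) (yf t) a c).
Proof. unfold prim1; derive_prim. Qed.

Lemma is_derive_prim2 b1 b2 :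
  is_derive (fun s => prim2 b1 b2 (xf s) (yf s)) t (Phi2_re b1 b2 (xf t) (yf t) a c).
Proof. unfold prim2; derive_prim. Qed.

Lemma is_derive_prim3 :
  is_derive (fun s => prim3 (xf s) (yf s)) t (Phi3_re (xf t) (yf t) a c).
Proof. unfold prim3; derive_prim. Qed.

End PrimitiveDerivatives.

Lemma is_derive_comp_filterdiff (f : C -> R) (L : C -> R) (g : R -> C) t a c :
  filterdiff (K := R_AbsRing) f (locally (g t)) L ->
  is_derive (fun s => Re (g s)) t a -> is_derive (fun s => Im (g s)) t c ->
  is_derive (fun s => f (g s)) t (L (a, c)).
Proof.
  intros Hf Ha Hc.
  assert (Hg : filterdiff (K := R_AbsRing) (U := R_NormedModule) (V := C_R_NormedModule)
     g (locally t) (fun s => (scal s a, scal s c))).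
  { apply filterdiff_ext with (fun s => (Re (g s), Im (g s))).
    { intros s; destruct (g s); reflexivity. }
    apply (filterdiff_comp'_2 (fun s => Re (g s)) (fun s => Im (g s)) (fun u v => (u, v)) t
       (fun s => scal s a) (fun s => scal s c) (fun u v => (u, v)) Ha Hc).
    apply filterdiff_ext_lin with (fun w => w); [|now intros []].
    apply filterdiff_ext with (fun w => w); [now intros [] | apply filterdiff_id]. }
  apply filterdiff_ext_lin with (1 := filterdiff_comp' g f t _ _ Hg Hf).
  intros s; destruct Hf as [Hl _].
  change (scal s a, scal s c) with (scal (V := C_R_NormedModule) s (a, c)).
  exact (linear_scal _ Hl s (a, c)).
Qed.

Lemma annulus_pos r1 r2 z : 0 <= r1 -> annulus r1 r2 z -> 0 < Re z * Re z + Im z * Im z.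
Proof.
  intros H0 [H1 _]; pose proof (Cmod2_alt z); simpl in *; nra.
Qed.

Lemma continuous_Rplus (f g : R -> R) x :
  continuous f x -> continuous g x -> continuous (fun s => f s + g s) x.
Proof. exact (continuous_plus f g x). Qed.
Lemma continuous_Rminus (f g : R -> R) x :
  continuous f x -> continuous g x -> continuous (fun s => f s - g s) x.
Proof. exact (continuous_minus f g x). Qed.
Lemma continuous_Rmult (f g : R -> R) x :
  continuous f x -> continuous g x -> continuous (fun s => f s * g s) x.
Proof. exact (continuous_mult f g x). Qed.
Lemma continuous_Ropp (f : R -> R) x : continuous f x -> continuous (fun s => - f s) x.
Proof. exact (continuous_opp f x). Qed.
Lemma continuous_Rdiv (f g : R -> R) x :
  continuous f x -> continuous g x -> g x <> 0 -> continuous (fun s => f s / g s) x.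
Proof. intros; apply continuous_Rmult, continuous_Rinv_comp; auto. Qed.
Lemma continuous_Rsqr (f : R -> R) x : continuous f x -> continuous (fun s => Rsqr (f s)) x.
Proof. intros; now apply continuous_Rmult. Qed.

Lemma continuous_Rpow (f : R -> R) x n : continuous f x -> continuous (fun s => f s ^ n) x.
Proof.
  intros Hf; induction n; [apply continuous_const | now apply continuous_Rmult].
Qed.

Ltac continuity_R := repeat match goal with
  | |- continuous (fun s => @?f s + @?g s) _ => apply (continuous_Rplus f g)
  | |- continuous (fun s => @?f s - @?g s) _ => apply (continuous_Rminus f g)
  | |- continuous (fun s => @?f s * @?g s) _ => apply (continuous_Rmult f g)
  | |- continuous (fun s => @?f s / @?g s) _ => apply (continuous_Rdiv f g)
  | |- continuous (fun s => - @?f s) _ => apply (continuous_Ropp f)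
  | |- continuous (fun s => Rsqr (@?f s)) _ => apply (continuous_Rsqr f)
  | |- continuous (fun s => sqrt (@?f s)) _ => apply (continuous_sqrt_comp f)
  | |- continuous (fun s => @?f s ^ _) _ => apply (continuous_Rpow f)
  | |- continuous (fun s => ?c) _ => apply continuous_const
  end.

Definition C1_at (g : R -> C) (t : R) : Prop :=
  ex_derive (fun s => Re (g s)) t /\ ex_derive (fun s => Im (g s)) t /\
  continuous (Derive (fun s => Re (g s))) t /\ continuous (Derive (fun s => Im (g s))) t.

Section AlongCurve.

Variables (b : C) (g : R -> C) (t : R).
Hypotheses (Hg : C1_at g t) (Hr : 0 < Re (g t) * Re (g t) + Im (g t) * Im (g t)).

Let b1 := Re b.
Let b2 := Im b.
Let x s := Re (g s).
Let y s := Im (g s).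
Let a := Derive x.
Let c := Derive y.

Lemma Phi_re_along_continuous :
  continuous (fun s => Phi1_re b1 b2 (x s) (y s) (a s) (c s)) t /\
  continuous (fun s => Phi2_re b1 b2 (x s) (y s) (a s) (c s)) t /\
  continuous (fun s => Phi3_re (x s) (y s) (a s) (c s)) t.
Proof.
  destruct Hg as (Hx & Hy & Ha & Hc).
  apply ex_derive_continuous in Hx, Hy.
  unfold Phi1_re, Phi2_re, Phi3_re, bconj2_re, bconj2_im.
  split; [|split]; continuity_R; auto; try (apply pow_nonzero); unfold x, y; lra.
Qed.

End AlongCurve.

Definition speed (b : C) (g : R -> C) (t : R) : R :=
  Phi_norm (Re b) (Im b) (Re (g t)) (Im (g t))
    (Derive (fun s => Re (g s)) t) (Derive (fun s => Im (g s)) t).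

Lemma speed_continuous b g t :
  C1_at g t -> 0 < Re (g t) * Re (g t) + Im (g t) * Im (g t) -> continuous (speed b g) t.
Proof.
  intros Hg Hr; destruct (Phi_re_along_continuous b g t Hg Hr) as (H1 & H2 & H3).
  unfold speed, Phi_norm; continuity_R; assumption.
Qed.

Lemma Derive_Re_primitive_along b r1 r2 X1 X2 X3 g t :
  0 <= r1 -> is_Re_primitive r1 r2 b X1 X2 X3 -> annulus r1 r2 (g t) ->
  ex_derive (fun s => Re (g s)) t -> ex_derive (fun s => Im (g s)) t ->
  let a := Derive (fun s => Re (g s)) t in
  let c := Derive (fun s => Im (g s)) t in
  Derive (fun s => X1 (g s)) t = Phi1_re (Re b) (Im b) (Re (g t)) (Im (g t)) a c /\
  Derive (fun s => X2 (g s)) t = Phi2_re (Re b) (Im b) (Re (g t)) (Im (g t)) a c /\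
  Derive (fun s => X3 (g s)) t = Phi3_re (Re (g t)) (Im (g t)) a c.
Proof.
  intros H0 HX Hz Ha Hc a c.
  pose proof (annulus_pos _ _ _ H0 Hz) as Hr.
  apply Derive_correct in Ha, Hc.
  destruct (HX _ Hz) as (H1 & H2 & H3).
  split; [|split];
    [ refine (eq_trans (is_derive_unique _ _ _ (is_derive_comp_filterdiff _ _ g t _ _ H1 Ha Hc)) _)
    | refine (eq_trans (is_derive_unique _ _ _ (is_derive_comp_filterdiff _ _ g t _ _ H2 Ha Hc)) _)
    | refine (eq_trans (is_derive_unique _ _ _ (is_derive_comp_filterdiff _ _ g t _ _ H3 Ha Hc)) _) ];
    destruct (g t) as [x y], b as [b1 b2]; simpl in *.
  - exact (Re_phi1_mult b1 b2 x y a c Hr).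
  - exact (Re_phi2_mult b1 b2 x y a c Hr).
  - exact (Re_phi3_mult x y a c Hr).
Qed.

Lemma induced_length_speed b r1 r2 X1 X2 X3 p q g :
  0 <= r1 -> is_Re_primitive r1 r2 b X1 X2 X3 -> admissible_curve r1 r2 p q g ->
  induced_length X1 X2 X3 g = RInt (speed b g) 0 1.
Proof.
  intros H0 HX (_ & _ & Hin & Hd); apply RInt_ext.
  rewrite Rmin_left, Rmax_right by lra; intros t Ht.
  destruct (Hd t ltac:(lra)) as (Ha & Hc & _).
  destruct (Derive_Re_primitive_along b r1 r2 X1 X2 X3 g t H0 HX (Hin t ltac:(lra)) Ha Hc)
    as (E1 & E2 & E3).
  unfold speed, Phi_norm; rewrite E1, E2, E3; reflexivity.
Qed.

Lemma abs_increment_le_RInt (F dF J : R -> R) a b : a <= b ->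
  (forall t, a <= t <= b -> is_derive F t (dF t)) ->
  (forall t, a <= t <= b -> continuous dF t) ->
  (forall t, a <= t <= b -> continuous J t) ->
  (forall t, a <= t <= b -> Rabs (dF t) <= J t) ->
  Rabs (F b - F a) <= RInt J a b.
Proof.
  intros Hab HF HdF HJ Hle.
  assert (Hin : forall t, Rmin a b <= t <= Rmax a b -> a <= t <= b)
    by (rewrite Rmin_left, Rmax_right; auto).
  pose proof (is_RInt_derive F dF a b (fun t Ht => HF t (Hin t Ht)) (fun t Ht => HdF t (Hin t Ht)))
    as IF.
  replace (F b - F a) with (RInt dF a b) by exact (is_RInt_unique _ _ _ _ IF).
  eapply Rle_trans; [apply abs_RInt_le; [exact Hab | eexists; exact IF] |].
  apply RInt_le; [exact Hab | apply (ex_RInt_continuous (V := R_CompleteNormedModule)) .. | intros t Ht; apply Hle; lra].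
  - intros t Ht; apply continuous_Rabs_comp, HdF, Hin, Ht.
  - intros t Ht; apply HJ, Hin, Ht.
Qed.

Lemma prim_increments_le_length b r1 r2 X1 X2 X3 p q g :
  0 <= r1 -> is_Re_primitive r1 r2 b X1 X2 X3 -> admissible_curve r1 r2 p q g ->
  let L := induced_length X1 X2 X3 g in
  Rabs (prim1 (Re b) (Im b) (Re q) (Im q) - prim1 (Re b) (Im b) (Re p) (Im p)) <= L /\
  Rabs (prim2 (Re b) (Im b) (Re q) (Im q) - prim2 (Re b) (Im b) (Re p) (Im p)) <= L /\
  Rabs (prim3 (Re q) (Im q) - prim3 (Re p) (Im p)) <= L.
Proof.
  intros H0 HX Hg L; unfold L; rewrite (induced_length_speed b r1 r2 X1 X2 X3 p q g H0 HX Hg).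
  destruct Hg as (<- & <- & Hin & HC1).
  assert (Hr : forall t, 0 <= t <= 1 -> 0 < Re (g t) * Re (g t) + Im (g t) * Im (g t))
    by (intros t Ht; exact (annulus_pos _ _ _ H0 (Hin t Ht))).
  assert (Hxy : forall t, 0 <= t <= 1 ->
    is_derive (fun s => Re (g s)) t (Derive (fun s => Re (g s)) t) /\
    is_derive (fun s => Im (g s)) t (Derive (fun s => Im (g s)) t))
    by (intros t Ht; destruct (HC1 t Ht) as (Hx & Hy & _); split; now apply Derive_correct).
  set (a := fun s => Derive (fun u => Re (g u)) s).
  set (c := fun s => Derive (fun u => Im (g u)) s).
  split; [|split];
    [ apply (abs_increment_le_RInt (fun s => prim1 (Re b) (Im b) (Re (g s)) (Im (g s)))
        (fun s => Phi1_re (Re b) (Im b) (Re (g s)) (Im (g s)) (a s) (c s)))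
    | apply (abs_increment_le_RInt (fun s => prim2 (Re b) (Im b) (Re (g s)) (Im (g s)))
        (fun s => Phi2_re (Re b) (Im b) (Re (g s)) (Im (g s)) (a s) (c s)))
    | apply (abs_increment_le_RInt (fun s => prim3 (Re (g s)) (Im (g s)))
        (fun s => Phi3_re (Re (g s)) (Im (g s)) (a s) (c s))) ];
    try lra; intros t Ht; destruct (Hxy t Ht) as [Hx Hy];
    destruct (Phi_re_along_continuous b g t (HC1 t Ht) (Hr t Ht)) as (C1 & C2 & C3);
    destruct (Phi_re_le_norm (Re b) (Im b) (Re (g t)) (Im (g t)) (a t) (c t)) as (B1 & B2 & B3);
    try assumption; try exact (speed_continuous b g t (HC1 t Ht) (Hr t Ht)).
  - exact (is_derive_prim1 _ _ _ _ _ Hx Hy (Hr t Ht) (Re b) (Im b)).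
  - exact (is_derive_prim2 _ _ _ _ _ Hx Hy (Hr t Ht) (Re b) (Im b)).
  - exact (is_derive_prim3 _ _ _ _ _ Hx Hy (Hr t Ht)).
Qed.

Lemma induced_dist_ge_prims b r1 r2 X1 X2 X3 p q :
  0 <= r1 -> is_Re_primitive r1 r2 b X1 X2 X3 ->
  let d := induced_dist r1 r2 X1 X2 X3 p q in
  Rbar_le (Rabs (prim1 (Re b) (Im b) (Re q) (Im q) - prim1 (Re b) (Im b) (Re p) (Im p))) d /\
  Rbar_le (Rabs (prim2 (Re b) (Im b) (Re q) (Im q) - prim2 (Re b) (Im b) (Re p) (Im p))) d /\
  Rbar_le (Rabs (prim3 (Re q) (Im q) - prim3 (Re p) (Im p))) d.
Proof.
  intros H0 HX d.
  destruct (Glb_Rbar_correct (fun l => exists g, admissible_curve r1 r2 p q g /\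
    l = induced_length X1 X2 X3 g)) as [_ Hglb].
  split; [|split]; apply Hglb; intros l (g & Hg & ->); simpl;
    apply (prim_increments_le_length b r1 r2 X1 X2 X3 p q g H0 HX Hg).
Qed.

Definition seg (p q : C) (t : R) : C := (Re p + t * (Re q - Re p), Im p + t * (Im q - Im p)).

Lemma is_derive_affine (u d t : R) : is_derive (fun s => u + s * d) t d.
Proof. auto_derive; auto; ring. Qed.

Lemma seg_admissible r1 r2 p q : (forall t, 0 <= t <= 1 -> annulus r1 r2 (seg p q t)) ->
  admissible_curve r1 r2 p q (seg p q).
Proof.
  intros H; destruct p as [p1 p2], q as [q1 q2]; unfold seg; simpl.
  split; [|split; [|split]]; auto; try (f_equal; ring).
  intros t _; split; [|split; [|split]];
    try (eexists; apply is_derive_affine);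
    eapply continuous_ext; try apply continuous_const;
    intros s; simpl; symmetry; apply is_derive_unique, is_derive_affine.
Qed.

Definition lipschitz_const (b : C) (rho : R) : R := 3 * (1 + Cmod b / (rho * rho) + / rho).

Lemma lipschitz_const_pos b rho : 0 < rho -> 0 < lipschitz_const b rho.
Proof.
  intros Hrho; unfold lipschitz_const.
  assert (0 <= Cmod b / (rho * rho)) by (apply Rdiv_le_0_compat; [apply Cmod_ge_0 | nra]).
  assert (0 < / rho) by (apply Rinv_0_lt_compat; lra).
  lra.
Qed.

Lemma sqrt_sum3_le u v w : sqrt (Rsqr u + Rsqr v + Rsqr w) <= Rabs u + Rabs v + Rabs w.
Proof.
  pose proof (Rabs_pos u); pose proof (Rabs_pos v); pose proof (Rabs_pos w).
  rewrite <- (sqrt_Rsqr (Rabs u + Rabs v + Rabs w)) by lra.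
  apply sqrt_le_1_alt; rewrite (Rsqr_abs u), (Rsqr_abs v), (Rsqr_abs w); unfold Rsqr; nra.
Qed.

Lemma Cmod_pair_le (a c : R) : Cmod (a, c) <= Rabs a + Rabs c.
Proof.
  unfold Cmod; simpl; pose proof (Rabs_pos a); pose proof (Rabs_pos c).
  rewrite <- (sqrt_Rsqr (Rabs a + Rabs c)) by lra.
  assert (Rabs a * Rabs a = a * a) by (rewrite <- Rabs_mult; apply Rabs_pos_eq; nra).
  assert (Rabs c * Rabs c = c * c) by (rewrite <- Rabs_mult; apply Rabs_pos_eq; nra).
  apply sqrt_le_1_alt; unfold Rsqr; nra.
Qed.

Lemma Phi_norm_le b z v rho : 0 < rho <= Cmod z ->
  Phi_norm (Re b) (Im b) (Re z) (Im z) (Re v) (Im v) <= lipschitz_const b rho * Cmod v.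
Proof.
  intros Hrho.
  assert (Hz : z <> 0%C) by (intros ->; rewrite Cmod_0 in Hrho; lra).
  assert (Hr : 0 < Re z * Re z + Im z * Im z) by (apply (annulus_pos 0 p_infty); [lra | split; simpl; lra]).
  assert (0 <= Cmod b / (rho * rho)) by (apply Rdiv_le_0_compat; [apply Cmod_ge_0 | nra]).
  assert (0 < / rho) by (apply Rinv_0_lt_compat; lra).
  set (K := 1 + Cmod b / (rho * rho) + / rho).
  assert (Hb : Cmod (b / (z * z))%C <= Cmod b / (rho * rho)).
  { unfold Cdiv; rewrite Cmod_mult, Cmod_inv, Cmod_mult by (apply Cmult_neq_0; auto).
    apply Rmult_le_compat_l; [apply Cmod_ge_0 | apply Rinv_le_contravar; nra]. }
  assert (Hinv : / Cmod z <= / rho) by (apply Rinv_le_contravar; lra).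
  assert (Hphi : forall w, Cmod w <= K -> Rabs (Re (w * v)%C) <= K * Cmod v).
  { intros w Hw; eapply Rle_trans; [apply re_le_Cmod|].
    rewrite Cmod_mult; apply Rmult_le_compat_r; [apply Cmod_ge_0 | exact Hw]. }
  assert (H1 : Cmod (phi1 b z) <= K).
  { unfold phi1, K; eapply Rle_trans; [apply Cmod_triangle|].
    rewrite Cmod_opp, Cmod_1; lra. }
  assert (H2 : Cmod (phi2 b z) <= K).
  { unfold phi2, K; rewrite Cmod_mult, Cmod_Ci, Rmult_1_l.
    eapply Rle_trans; [apply Cmod_triangle|]; rewrite Cmod_1; lra. }
  assert (H3 : Cmod (phi3 z) <= K).
  { unfold phi3, K; rewrite Cmod_inv by exact Hz; lra. }
  destruct b as [b1 b2], z as [x y], v as [a c]; simpl in Hr |- *.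
  unfold Phi_norm; rewrite <- Re_phi1_mult, <- Re_phi2_mult, <- Re_phi3_mult by exact Hr.
  eapply Rle_trans; [apply sqrt_sum3_le|].
  pose proof (Hphi _ H1); pose proof (Hphi _ H2); pose proof (Hphi _ H3).
  unfold lipschitz_const; fold K; lra.
Qed.

Lemma induced_dist_le_segment b r1 r2 X1 X2 X3 p q rho :
  0 <= r1 -> 0 < rho -> is_Re_primitive r1 r2 b X1 X2 X3 ->
  (forall t, 0 <= t <= 1 -> annulus r1 r2 (seg p q t) /\ rho <= Cmod (seg p q t)) ->
  Rbar_le (induced_dist r1 r2 X1 X2 X3 p q)
    (lipschitz_const b rho * (Rabs (Re q - Re p) + Rabs (Im q - Im p))).
Proof.
  intros H0 Hrho HX Hseg.
  set (B := lipschitz_const b rho * (Rabs (Re q - Re p) + Rabs (Im q - Im p))).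
  assert (Hadm : admissible_curve r1 r2 p q (seg p q)) by (apply seg_admissible, Hseg).
  destruct (Glb_Rbar_correct (fun l => exists g, admissible_curve r1 r2 p q g /\
    l = induced_length X1 X2 X3 g)) as [Hlb _].
  eapply Rbar_le_trans; [apply Hlb; exists (seg p q); split; [exact Hadm | reflexivity] |].
  simpl; rewrite (induced_length_speed b r1 r2 X1 X2 X3 p q _ H0 HX Hadm).
  apply Rle_trans with (RInt (fun _ => B) 0 1).
  2: { rewrite RInt_const; simpl; unfold scal; simpl; unfold mult; simpl; lra. }
  destruct Hadm as (_ & _ & Hin & HC1).
  apply RInt_le; [lra | | apply ex_RInt_const |].
  - apply (ex_RInt_continuous (V := R_CompleteNormedModule)).
    rewrite Rmin_left, Rmax_right by lra; intros t Ht.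
    exact (speed_continuous b _ t (HC1 t Ht) (annulus_pos _ _ _ H0 (Hin t Ht))).
  - intros t Ht; unfold speed.
    replace (Derive (fun s => Re (seg p q s)) t) with (Re q - Re p)
      by (symmetry; apply is_derive_unique, is_derive_affine).
    replace (Derive (fun s => Im (seg p q s)) t) with (Im q - Im p)
      by (symmetry; apply is_derive_unique, is_derive_affine).
    eapply Rle_trans; [apply (Phi_norm_le b _ (Re q - Re p, Im q - Im p) rho) |].
    + split; [lra | apply Hseg; lra].
    + apply Rmult_le_compat_l; [apply Rlt_le, lipschitz_const_pos, Hrho | apply Cmod_pair_le].
Qed.

Lemma sqnorm_exp_prim3 x y : 0 < x * x + y * y -> x * x + y * y = exp (2 * prim3 x y).
Proof.
  intros Hr; unfold prim3; replace (2 * (ln (x * x + y * y) / 2)) with (ln (x * x + y * y)) by field.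
  now rewrite exp_ln.
Qed.

Lemma is_lim_seq_sqnorm_exp (u : nat -> C) (l : R) :
  (forall n, 0 < Re (u n) * Re (u n) + Im (u n) * Im (u n)) ->
  is_lim_seq (fun n => prim3 (Re (u n)) (Im (u n))) l ->
  is_lim_seq (fun n => Re (u n) * Re (u n) + Im (u n) * Im (u n)) (exp (2 * l)).
Proof.
  intros Hr Hl.
  apply is_lim_seq_ext with (fun n => exp (2 * prim3 (Re (u n)) (Im (u n)))).
  { intros n; symmetry; apply sqnorm_exp_prim3, Hr. }
  apply (is_lim_seq_continuous (fun s => exp (2 * s))); [|exact Hl].
  apply continuity_pt_filterlim, continuous_exp_comp.
  apply (continuous_Rmult (fun _ => 2) (fun s => s)); [apply continuous_const | apply continuous_id].
Qed.

Lemma is_lim_seq_sqnorm_of_induced b r1 r2 X1 X2 X3 (u : nat -> C) p :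
  0 <= r1 -> is_Re_primitive r1 r2 b X1 X2 X3 ->
  (forall n, annulus r1 r2 (u n)) -> annulus r1 r2 p ->
  (forall eps, 0 < eps -> exists N, forall n, (N <= n)%nat ->
     Rbar_lt (induced_dist r1 r2 X1 X2 X3 (u n) p) eps) ->
  is_lim_seq (fun n => Re (u n) * Re (u n) + Im (u n) * Im (u n)) (Re p * Re p + Im p * Im p).
Proof.
  intros H0 HX Hu Hp Hlim.
  rewrite (sqnorm_exp_prim3 _ _ (annulus_pos _ _ _ H0 Hp)).
  apply is_lim_seq_sqnorm_exp; [intros n; exact (annulus_pos _ _ _ H0 (Hu n)) |].
  apply is_lim_seq_spec; intros eps; destruct (Hlim eps (cond_pos eps)) as [N HN].
  exists N; intros n Hn.
  destruct (induced_dist_ge_prims b r1 r2 X1 X2 X3 (u n) p H0 HX) as (_ & _ & H3).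
  rewrite Rabs_minus_sym; exact (Rbar_le_lt_trans _ _ _ H3 (HN n Hn)).
Qed.

Lemma induced_cauchy_of_segments b r1 r2 X1 X2 X3 (u : nat -> C) rho :
  0 <= r1 -> 0 < rho -> is_Re_primitive r1 r2 b X1 X2 X3 ->
  (forall m n t, 0 <= t <= 1 ->
     annulus r1 r2 (seg (u m) (u n) t) /\ rho <= Cmod (seg (u m) (u n) t)) ->
  ex_lim_seq_cauchy (fun n => Re (u n)) -> ex_lim_seq_cauchy (fun n => Im (u n)) ->
  forall eps, 0 < eps -> exists N, forall m n, (N <= m)%nat -> (N <= n)%nat ->
    Rbar_lt (induced_dist r1 r2 X1 X2 X3 (u m) (u n)) eps.
Proof.
  intros H0 Hrho HX Hseg Hx Hy eps Heps.
  set (K := lipschitz_const b rho); assert (HK : 0 < K) by now apply lipschitz_const_pos.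
  assert (Hd : 0 < eps / (2 * K)) by (apply Rdiv_lt_0_compat; lra).
  destruct (Hx (mkposreal _ Hd)) as [N1 HN1], (Hy (mkposreal _ Hd)) as [N2 HN2]; simpl in *.
  exists (max N1 N2); intros m n Hm Hn.
  eapply Rbar_le_lt_trans; [exact (induced_dist_le_segment b r1 r2 X1 X2 X3 _ _ rho H0 Hrho HX (Hseg m n)) |].
  simpl; fold K.
  assert (Rabs (Re (u n) - Re (u m)) + Rabs (Im (u n) - Im (u m)) < eps / K).
  { replace (eps / K) with (eps / (2 * K) + eps / (2 * K)) by (field; lra).
    apply Rplus_lt_compat; [apply HN1 | apply HN2]; lia. }
  apply (Rmult_lt_compat_l K) in H; [| exact HK].
  replace (K * (eps / K)) with eps in H by (field; lra); exact H.
Qed.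

Lemma Cmod_sqnorm (z : C) : Cmod z = sqrt (Re z * Re z + Im z * Im z).
Proof. unfold Cmod, Re, Im; f_equal; ring. Qed.

Lemma seg_RtoC (a c t : R) : seg (RtoC a) (RtoC c) t = RtoC (a + t * (c - a)).
Proof. unfold seg, RtoC; simpl; f_equal; ring. Qed.

Lemma annulus_RtoC r1 r2 s : 0 <= r1 -> r1 < s -> Rbar_lt s r2 -> annulus r1 r2 (RtoC s).
Proof. intros; split; rewrite Cmod_R, Rabs_pos_eq by lra; assumption. Qed.

Lemma convex_comb_between (a c t : R) : 0 <= t <= 1 ->
  Rmin a c <= a + t * (c - a) <= Rmax a c.
Proof. intros Ht; unfold Rmin, Rmax; destruct (Rle_dec a c); nra. Qed.

Lemma not_complete_of_radial b r1 r2 X1 X2 X3 (x : nat -> R) rho (R0 : R) :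
  0 <= r1 -> 0 < rho -> is_Re_primitive r1 r2 b X1 X2 X3 ->
  (forall n, r1 < x n /\ Rbar_lt (x n) r2 /\ rho <= x n) ->
  is_lim_seq x R0 -> (forall p, annulus r1 r2 p -> Cmod p <> R0) ->
  ~ induced_metric_complete r1 r2 X1 X2 X3.
Proof.
  intros H0 Hrho HX Hx Hlim Hout Hcompl.
  set (u := fun n => RtoC (x n)).
  assert (Hu : forall n, annulus r1 r2 (u n))
    by (intros n; destruct (Hx n) as (? & ? & ?); apply annulus_RtoC; auto; lra).
  assert (Hseg : forall m n t, 0 <= t <= 1 ->
    annulus r1 r2 (seg (u m) (u n) t) /\ rho <= Cmod (seg (u m) (u n) t)).
  { intros m n t Ht; unfold u; rewrite seg_RtoC.
    destruct (Hx m) as (? & Hm & ?), (Hx n) as (? & Hn & ?).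
    pose proof (convex_comb_between (x m) (x n) t Ht) as [Hmin Hmax].
    assert (r1 < Rmin (x m) (x n) /\ rho <= Rmin (x m) (x n)) as []
      by (unfold Rmin; destruct Rle_dec; lra).
    assert (Rbar_lt (Rmax (x m) (x n)) r2) by (unfold Rmax; destruct Rle_dec; assumption).
    split; [apply annulus_RtoC; [lra | lra | apply (Rbar_le_lt_trans _ (Rmax (x m) (x n))); assumption] |].
    rewrite Cmod_R, Rabs_pos_eq; lra. }
  assert (Hcx : ex_lim_seq_cauchy (fun n => Re (u n)))
    by (apply ex_lim_seq_cauchy_corr; exists R0; exact Hlim).
  assert (Hcy : ex_lim_seq_cauchy (fun n => Im (u n))).
  { intros eps; exists 0%nat; intros; simpl; rewrite Rminus_0_r, Rabs_R0; apply cond_pos. }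
  destruct (Hcompl u Hu (induced_cauchy_of_segments b r1 r2 X1 X2 X3 u rho H0 Hrho HX Hseg Hcx Hcy))
    as (p & Hp & Hconv).
  apply (Hout p Hp).
  pose proof (is_lim_seq_sqnorm_of_induced b r1 r2 X1 X2 X3 u p H0 HX Hu Hp Hconv) as L1.
  assert (L2 : is_lim_seq (fun n => Re (u n) * Re (u n) + Im (u n) * Im (u n)) (R0 * R0 + 0 * 0))
    by (apply is_lim_seq_plus'; apply is_lim_seq_mult'; auto; apply is_lim_seq_const).
  apply is_lim_seq_unique in L1, L2; rewrite L1 in L2; injection L2 as E.
  assert (HR0 : Rbar_le rho R0)
    by (apply (is_lim_seq_le (fun _ => rho) x); [apply Hx | apply is_lim_seq_const | exact Hlim]).
  simpl in HR0; rewrite Cmod_sqnorm, E, Rmult_0_l, Rplus_0_r; apply sqrt_square; lra.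
Qed.

Lemma is_lim_seq_div_succ (d : R) : is_lim_seq (fun n => d / (INR n + 1)) 0.
Proof.
  assert (H : is_lim_seq (fun n => / (INR n + 1)) (Rbar_inv p_infty)).
  { apply is_lim_seq_inv; [| discriminate].
    apply is_lim_seq_ext with (fun n => INR (S n)); [intros n; apply S_INR |].
    apply (is_lim_seq_incr_1 INR), is_lim_seq_INR. }
  rewrite <- (Rmult_0_r d); exact (is_lim_seq_mult' _ _ d 0 (is_lim_seq_const d) H).
Qed.

Lemma div_succ_bounds (d : R) (n : nat) : 0 < d -> 0 < d / (INR n + 1) <= d.
Proof.
  intros Hd; pose proof (pos_INR n); split; [apply Rdiv_lt_0_compat; lra |].
  apply Rle_div_l; nra.
Qed.

Lemma not_complete_inner_boundary b r1 r2 X1 X2 X3 :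
  0 < r1 -> Rbar_lt r1 r2 -> is_Re_primitive r1 r2 b X1 X2 X3 ->
  ~ induced_metric_complete r1 r2 X1 X2 X3.
Proof.
  intros Hr1 Hr12 HX.
  assert (exists c, r1 < c /\ Rbar_lt c r2) as (c & Hc1 & Hc2).
  { destruct r2 as [r2 | |]; simpl in Hr12 |- *; try easy.
    - exists ((r1 + r2) / 2); split; lra.
    - exists (r1 + 1); split; [lra | exact I]. }
  apply (not_complete_of_radial b r1 r2 X1 X2 X3 (fun n => r1 + (c - r1) / (INR n + 1)) r1 r1);
    try lra; auto.
  - intros n; pose proof (div_succ_bounds (c - r1) n ltac:(lra)).
    split; [lra | split; [apply (Rbar_le_lt_trans _ c); simpl; [lra | exact Hc2] | lra]].
  - replace (Finite r1) with (Finite (r1 + 0)) by (f_equal; ring).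
    exact (is_lim_seq_plus' _ _ r1 0 (is_lim_seq_const r1) (is_lim_seq_div_succ (c - r1))).
  - intros p [Hp _]; lra.
Qed.

Lemma not_complete_outer_boundary b r1 (r2 : R) X1 X2 X3 :
  0 <= r1 -> r1 < r2 -> is_Re_primitive r1 r2 b X1 X2 X3 ->
  ~ induced_metric_complete r1 r2 X1 X2 X3.
Proof.
  intros Hr1 Hr12 HX; set (c := (r1 + r2) / 2).
  apply (not_complete_of_radial b r1 r2 X1 X2 X3 (fun n => r2 - (r2 - c) / (INR n + 1)) c r2);
    auto; try (unfold c; lra).
  - intros n; pose proof (div_succ_bounds (r2 - c) n ltac:(unfold c; lra)).
    simpl; unfold c in *; lra.
  - replace (Finite r2) with (Finite (r2 - 0)) by (f_equal; ring).
    exact (is_lim_seq_minus' _ _ r2 0 (is_lim_seq_const r2) (is_lim_seq_div_succ (r2 - c))).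
  - intros p [_ Hp]; simpl in Hp; lra.
Qed.

Lemma prim12_inversion b1 b2 x y :
  let r := x * x + y * y in let al := 1 + b1 / r in let ga := b2 / r in
  0 < r -> al * al + ga * ga <> 0 ->
  x = (al * prim1 b1 b2 x y + ga * prim2 b1 b2 x y) / (al * al + ga * ga) /\
  y = (ga * prim1 b1 b2 x y - al * prim2 b1 b2 x y) / (al * al + ga * ga).
Proof.
  intros r al ga Hr Hdet.
  assert (E1 : prim1 b1 b2 x y = al * x + ga * y) by (unfold prim1, al, ga, r in *; field; lra).
  assert (E2 : prim2 b1 b2 x y = ga * x - al * y) by (unfold prim2, al, ga, r in *; field; lra).
  rewrite E1, E2; clearbody al ga; split; field; exact Hdet.
Qed.

Lemma inversion_det_neq0 b1 b2 r : 0 < r -> ~ (b2 = 0 /\ b1 < 0) ->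
  (1 + b1 / r) * (1 + b1 / r) + b2 / r * (b2 / r) <> 0.
Proof.
  intros Hr Hb Hdet; apply Hb.
  assert (1 + b1 / r = 0 /\ b2 / r = 0) as [E1 E2].
  { revert Hdet; generalize (1 + b1 / r) (b2 / r); intros A B Hdet; split; nra. }
  replace b1 with (b1 / r * r) by (field; lra).
  replace b2 with (b2 / r * r) by (field; lra).
  rewrite E2; replace (b1 / r) with (-1) by lra; split; lra.
Qed.

Lemma Cmod_seg_ge p q t : 0 <= t <= 1 ->
  Cmod p - (Rabs (Re p - Re q) + Rabs (Im p - Im q)) <= Cmod (seg q p t).
Proof.
  intros Ht.
  set (w := ((1 - t) * (Re p - Re q), (1 - t) * (Im p - Im q)) : C).
  assert (Ep : p = (seg q p t + w)%C)
    by (destruct p, q; unfold seg, w, Cplus; simpl; f_equal; ring).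
  assert (Hw : Cmod w <= Rabs (Re p - Re q) + Rabs (Im p - Im q)).
  { eapply Rle_trans; [apply Cmod_pair_le |]; rewrite !Rabs_mult, (Rabs_pos_eq (1 - t)) by lra.
    pose proof (Rabs_pos (Re p - Re q)); pose proof (Rabs_pos (Im p - Im q)); nra. }
  pose proof (Cmod_triangle (seg q p t) w) as Htri; rewrite <- Ep in Htri; lra.
Qed.

Lemma induced_dist_tendsto_of_coords b X1 X2 X3 (u : nat -> C) p :
  is_Re_primitive 0 p_infty b X1 X2 X3 -> 0 < Cmod p ->
  is_lim_seq (fun n => Re (u n)) (Re p) -> is_lim_seq (fun n => Im (u n)) (Im p) ->
  forall eps, 0 < eps -> exists N, forall n, (N <= n)%nat ->
    Rbar_lt (induced_dist 0 p_infty X1 X2 X3 (u n) p) eps.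
Proof.
  intros HX Hp Hx Hy eps Heps.
  set (rho := Cmod p / 2); assert (Hrho : 0 < rho) by (unfold rho; lra).
  set (K := lipschitz_const b rho); assert (HK : 0 < K) by now apply lipschitz_const_pos.
  set (delta := Rmin (rho / 2) (eps / (4 * K))).
  assert (Hdelta : 0 < delta) by (apply Rmin_pos; [lra | apply Rdiv_lt_0_compat; lra]).
  assert (delta <= rho / 2) by apply Rmin_l.
  assert (delta <= eps / (4 * K)) by apply Rmin_r.
  apply is_lim_seq_spec in Hx, Hy.
  destruct (Hx (mkposreal _ Hdelta)) as [N1 HN1], (Hy (mkposreal _ Hdelta)) as [N2 HN2].
  exists (max N1 N2); intros n Hn.
  assert (Hd : Rabs (Re p - Re (u n)) + Rabs (Im p - Im (u n)) < 2 * delta).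
  { rewrite (Rabs_minus_sym (Re p)), (Rabs_minus_sym (Im p)).
    pose proof (HN1 n ltac:(lia)); pose proof (HN2 n ltac:(lia)); simpl in *; lra. }
  eapply Rbar_le_lt_trans.
  - apply (induced_dist_le_segment b 0 p_infty X1 X2 X3 (u n) p rho); auto; [lra |].
    intros t Ht; pose proof (Cmod_seg_ge p (u n) t Ht).
    unfold rho in *; split; [split; simpl; [lra | exact I] | lra].
  - simpl; fold K.
    apply Rle_lt_trans with (K * (2 * (eps / (4 * K)))); [apply Rmult_le_compat_l; lra |].
    replace (K * (2 * (eps / (4 * K)))) with (eps / 2) by (field; lra); lra.
Qed.

Lemma ex_lim_seq_of_induced_cauchy r1 r2 X1 X2 X3 (u : nat -> C) (f : C -> R) :
  (forall p q, Rbar_le (Rabs (f q - f p)) (induced_dist r1 r2 X1 X2 X3 p q)) ->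
  (forall eps, 0 < eps -> exists N, forall m n, (N <= m)%nat -> (N <= n)%nat ->
     Rbar_lt (induced_dist r1 r2 X1 X2 X3 (u m) (u n)) eps) ->
  exists l : R, is_lim_seq (fun n => f (u n)) l.
Proof.
  intros Hf Hu; apply ex_lim_seq_cauchy_corr; intros eps.
  destruct (Hu eps (cond_pos eps)) as [N HN]; exists N; intros n m Hn Hm.
  exact (Rbar_le_lt_trans _ _ _ (Hf (u m) (u n)) (HN m n Hm Hn)).
Qed.

Lemma coords_converge_of_prims b1 b2 (u : nat -> C) (L1 L2 L3 : R) :
  ~ (b2 = 0 /\ b1 < 0) -> (forall n, 0 < Re (u n) * Re (u n) + Im (u n) * Im (u n)) ->
  is_lim_seq (fun n => prim1 b1 b2 (Re (u n)) (Im (u n))) L1 ->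
  is_lim_seq (fun n => prim2 b1 b2 (Re (u n)) (Im (u n))) L2 ->
  is_lim_seq (fun n => prim3 (Re (u n)) (Im (u n))) L3 ->
  exists x y : R, is_lim_seq (fun n => Re (u n)) x /\ is_lim_seq (fun n => Im (u n)) y /\
    0 < x * x + y * y.
Proof.
  intros Hb Hr H1 H2 H3.
  set (r := fun n => Re (u n) * Re (u n) + Im (u n) * Im (u n)).
  set (rs := exp (2 * L3)); assert (Hrs : 0 < rs) by apply exp_pos.
  assert (Lr : is_lim_seq r rs) by exact (is_lim_seq_sqnorm_exp u L3 Hr H3).
  set (al := fun s => 1 + b1 / s); set (ga := fun s => b2 / s).
  set (det := fun s => al s * al s + ga s * ga s).
  assert (Hdet : forall s, 0 < s -> det s <> 0) by (intros; now apply inversion_det_neq0).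
  assert (Lal : is_lim_seq (fun n => al (r n)) (al rs)).
  { apply is_lim_seq_plus'; [apply is_lim_seq_const |].
    apply is_lim_seq_div'; [apply is_lim_seq_const | exact Lr | lra]. }
  assert (Lga : is_lim_seq (fun n => ga (r n)) (ga rs))
    by (apply is_lim_seq_div'; [apply is_lim_seq_const | exact Lr | lra]).
  assert (Ldet : is_lim_seq (fun n => det (r n)) (det rs))
    by (apply is_lim_seq_plus'; apply is_lim_seq_mult'; assumption).
  exists ((al rs * L1 + ga rs * L2) / det rs), ((ga rs * L1 - al rs * L2) / det rs).
  assert (Lx : is_lim_seq (fun n => Re (u n)) ((al rs * L1 + ga rs * L2) / det rs)).
  { apply is_lim_seq_ext with (fun n => (al (r n) * prim1 b1 b2 (Re (u n)) (Im (u n)) +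
      ga (r n) * prim2 b1 b2 (Re (u n)) (Im (u n))) / det (r n)).
    { intros n; symmetry; apply (prim12_inversion b1 b2), Hdet; apply Hr. }
    apply is_lim_seq_div'; [| exact Ldet | now apply Hdet].
    apply is_lim_seq_plus'; apply is_lim_seq_mult'; assumption. }
  assert (Ly : is_lim_seq (fun n => Im (u n)) ((ga rs * L1 - al rs * L2) / det rs)).
  { apply is_lim_seq_ext with (fun n => (ga (r n) * prim1 b1 b2 (Re (u n)) (Im (u n)) -
      al (r n) * prim2 b1 b2 (Re (u n)) (Im (u n))) / det (r n)).
    { intros n; symmetry; apply (prim12_inversion b1 b2), Hdet; apply Hr. }
    apply is_lim_seq_div'; [| exact Ldet | now apply Hdet].
    apply (is_lim_seq_minus' (fun n => ga (r n) * _) (fun n => al (r n) * _));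
      apply is_lim_seq_mult'; assumption. }
  do 2 (split; [assumption |]).
  assert (Lr' := is_lim_seq_plus' _ _ _ _ (is_lim_seq_mult' _ _ _ _ Lx Lx) (is_lim_seq_mult' _ _ _ _ Ly Ly)).
  pose proof (eq_trans (eq_sym (is_lim_seq_unique _ _ Lr)) (is_lim_seq_unique _ _ Lr')) as E.
  injection E as E; rewrite E in Hrs; exact Hrs.
Qed.

Lemma induced_metric_complete_punctured b X1 X2 X3 :
  is_Re_primitive 0 p_infty b X1 X2 X3 -> ~ (Im b = 0 /\ Re b < 0) ->
  induced_metric_complete 0 p_infty X1 X2 X3.
Proof.
  intros HX Hb u Hu Hcauchy.
  assert (H0 : 0 <= 0) by lra.
  destruct (ex_lim_seq_of_induced_cauchy _ _ _ _ _ u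
    (fun z => prim1 (Re b) (Im b) (Re z) (Im z)) (fun p q => proj1 (induced_dist_ge_prims b 0 p_infty X1 X2 X3 p q H0 HX)) Hcauchy) as [L1 H1].
  destruct (ex_lim_seq_of_induced_cauchy _ _ _ _ _ u
    (fun z => prim2 (Re b) (Im b) (Re z) (Im z)) (fun p q => proj1 (proj2 (induced_dist_ge_prims b 0 p_infty X1 X2 X3 p q H0 HX))) Hcauchy) as [L2 H2].
  destruct (ex_lim_seq_of_induced_cauchy _ _ _ _ _ u
    (fun z => prim3 (Re z) (Im z)) (fun p q => proj2 (proj2 (induced_dist_ge_prims b 0 p_infty X1 X2 X3 p q H0 HX))) Hcauchy) as [L3 H3].
  destruct (coords_converge_of_prims (Re b) (Im b) u L1 L2 L3 Hb
    (fun n => annulus_pos _ _ _ H0 (Hu n)) H1 H2 H3) as (x & y & Hx & Hy & Hxy).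
  assert (Hp : 0 < Cmod (x, y)) by (rewrite Cmod_sqnorm; apply sqrt_lt_R0, Hxy).
  exists (x, y); split; [split; simpl; [exact Hp | exact I] |].
  exact (induced_dist_tendsto_of_coords b X1 X2 X3 u (x, y) HX Hp Hx Hy).
Qed.

Lemma dX_Phi_re b r1 r2 X1 X2 X3 p v :
  0 <= r1 -> is_Re_primitive r1 r2 b X1 X2 X3 -> annulus r1 r2 p ->
  dX X1 X2 X3 p v = (Phi1_re (Re b) (Im b) (Re p) (Im p) (Re v) (Im v),
                     Phi2_re (Re b) (Im b) (Re p) (Im p) (Re v) (Im v),
                     Phi3_re (Re p) (Im p) (Re v) (Im v)).
Proof.
  intros H0 HX Hp.
  set (g := fun t : R => (p + RtoC t * v)%C).
  assert (Hg0 : g 0 = p) by (unfold g; destruct p, v; unfold RtoC, Cplus, Cmult; simpl; f_equal; ring).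
  assert (Dx : is_derive (fun s => Re (g s)) 0 (Re v)).
  { apply is_derive_ext with (fun s => Re p + s * Re v); [| apply is_derive_affine].
    intros s; unfold g; destruct p, v; simpl; ring. }
  assert (Dy : is_derive (fun s => Im (g s)) 0 (Im v)).
  { apply is_derive_ext with (fun s => Im p + s * Im v); [| apply is_derive_affine].
    intros s; unfold g; destruct p, v; simpl; ring. }
  rewrite <- Hg0 in Hp.
  destruct (Derive_Re_primitive_along b r1 r2 X1 X2 X3 g 0 H0 HX Hp
    (ex_intro _ _ Dx) (ex_intro _ _ Dy)) as (E1 & E2 & E3).
  replace (Derive (fun s => Re (g s)) 0) with (Re v) in E1, E2, E3
    by (symmetry; exact (is_derive_unique _ _ _ Dx)).
  replace (Derive (fun s => Im (g s)) 0) with (Im v) in E1, E2, E3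
    by (symmetry; exact (is_derive_unique _ _ _ Dy)).
  rewrite Hg0 in E1, E2, E3.
  unfold dX; f_equal; [f_equal |]; [exact E1 | exact E2 | exact E3].
Qed.

Lemma Phi_re_kernel b1 b2 x y a c : 0 < x * x + y * y -> 0 < a * a + c * c ->
  Phi1_re b1 b2 x y a c = 0 -> Phi2_re b1 b2 x y a c = 0 -> Phi3_re x y a c = 0 ->
  b2 = 0 /\ b1 < 0.
Proof.
  unfold Phi1_re, Phi2_re, Phi3_re; intros Hr Hv E1 E2 E3.
  set (r := x * x + y * y) in *.
  set (w1 := bconj2_re b1 b2 x y) in *; set (w2 := bconj2_im b1 b2 x y) in *.
  assert (F1 : w1 * a - w2 * c = a * r ^ 2).
  { replace (w1 * a - w2 * c) with ((w1 * a - w2 * c) / r ^ 2 * r ^ 2) by (field; lra).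
    now replace ((w1 * a - w2 * c) / r ^ 2) with a by lra. }
  assert (F2 : w1 * c + w2 * a = - c * r ^ 2).
  { replace (w1 * c + w2 * a) with ((w1 * c + w2 * a) / r ^ 2 * r ^ 2) by (field; lra).
    now replace ((w1 * c + w2 * a) / r ^ 2) with (- c) by lra. }
  assert (F3 : a * x + c * y = 0).
  { replace (a * x + c * y) with ((a * x + c * y) / r * r) by (field; lra).
    rewrite E3; ring. }
  (* [F3] says [v = i s z] for a real [s]; [I1], [I2] use this without dividing by [z]. *)
  assert (I1 : (a * a + c * c) * (y * y - x * x) - (a * a - c * c) * r = 2 * (c * y - a * x) * (a * x + c * y))
    by (unfold r; ring).
  assert (I2 : (a * a + c * c) * (2 * x * y) + 2 * a * c * r = 2 * (a * x + c * y) * (a * y + c * x))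
    by (unfold r; ring).
  rewrite F3, Rmult_0_r in I1; rewrite F3, Rmult_0_r, Rmult_0_l in I2.
  assert (W1 : w1 = r * (y * y - x * x)).
  { apply (Rmult_eq_reg_r (a * a + c * c)); [| lra].
    transitivity (a * (w1 * a - w2 * c) + c * (w1 * c + w2 * a)); [ring |].
    rewrite F1, F2; nra. }
  assert (W2 : w2 = r * (2 * x * y)).
  { apply (Rmult_eq_reg_r (a * a + c * c)); [| lra].
    transitivity (a * (w1 * c + w2 * a) - c * (w1 * a - w2 * c)); [ring |].
    rewrite F1, F2; nra. }
  unfold w1, w2, bconj2_re, bconj2_im in W1, W2.
  assert (V1 : (b1 + r) * (r * r) = 0).
  { transitivity ((x * x - y * y) * (b1 * (x * x - y * y) + 2 * b2 * x * y - r * (y * y - x * x))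
      - 2 * x * y * (b2 * (x * x - y * y) - 2 * b1 * x * y - r * (2 * x * y))); [unfold r; ring |].
    rewrite W1, W2; ring. }
  assert (V2 : b2 * (r * r) = 0).
  { transitivity (2 * x * y * (b1 * (x * x - y * y) + 2 * b2 * x * y - r * (y * y - x * x))
      + (x * x - y * y) * (b2 * (x * x - y * y) - 2 * b1 * x * y - r * (2 * x * y))); [unfold r; ring |].
    rewrite W1, W2; ring. }
  apply Rmult_integral in V1, V2.
  destruct V1, V2; try nra; split; lra.
Qed.

Lemma immersion_of_not_neg_real b r1 r2 X1 X2 X3 :
  0 <= r1 -> is_Re_primitive r1 r2 b X1 X2 X3 -> ~ (Im b = 0 /\ Re b < 0) ->
  is_immersion r1 r2 X1 X2 X3.
Proof.
  intros H0 HX Hb p v Hp Hv E.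
  rewrite (dX_Phi_re b r1 r2 X1 X2 X3 p v H0 HX Hp) in E; injection E as E1 E2 E3.
  apply Hb, (Phi_re_kernel _ _ (Re p) (Im p) (Re v) (Im v)); auto.
  - exact (annulus_pos _ _ _ H0 Hp).
  - simpl; nra.
Qed.

(* For [b = -s^2] the differential vanishes at [z = i s] in the direction [1]. *)
Lemma not_immersion_of_neg_real b X1 X2 X3 :
  is_Re_primitive 0 p_infty b X1 X2 X3 -> Im b = 0 -> Re b < 0 ->
  ~ is_immersion 0 p_infty X1 X2 X3.
Proof.
  intros HX Hi Hre Himm.
  set (s := sqrt (- Re b)); assert (Hs : 0 < s) by (apply sqrt_lt_R0; lra).
  assert (Hb : Re b = - (s * s)) by (unfold s; rewrite sqrt_sqrt; lra).
  assert (Hp : annulus 0 p_infty (0, s)).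
  { split; [| exact I]; rewrite Cmod_sqnorm; simpl.
    rewrite Rmult_0_l, Rplus_0_l, sqrt_square; lra. }
  apply (Himm (0, s) 1 Hp R1_neq_R0).
  rewrite (dX_Phi_re b 0 p_infty X1 X2 X3 (0, s) 1 (Rle_refl 0) HX Hp); simpl.
  rewrite Hi, Hb; unfold Phi1_re, Phi2_re, Phi3_re, bconj2_re, bconj2_im.
  f_equal; [f_equal |]; field; lra.
Qed.

Theorem proposition3p3 (b : C) (r1 : R) (r2 : Rbar) (X1 X2 X3 : C -> R) :
  0 <= r1 -> Rbar_lt (Finite r1) r2 ->
  is_Re_primitive r1 r2 b X1 X2 X3 ->
  (complete_immersion r1 r2 X1 X2 X3 <->
   (r1 = 0 /\ r2 = p_infty /\ ~ (Im b = 0 /\ Re b < 0))).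
Proof.
  intros Hr1 Hr12 HX; split.
  - intros [Himm Hcompl].
    assert (E1 : r1 = 0).
    { destruct (Req_dec r1 0) as [| Hne]; [assumption | exfalso].
      apply (not_complete_inner_boundary b r1 r2 X1 X2 X3); auto; lra. }
    assert (E2 : r2 = p_infty).
    { destruct r2 as [r2 | |]; [exfalso | reflexivity | contradiction].
      exact (not_complete_outer_boundary b r1 r2 X1 X2 X3 Hr1 Hr12 HX Hcompl). }
    subst r1 r2; split; [reflexivity | split; [reflexivity |]].
    intros [Hi Hre]; exact (not_immersion_of_neg_real b X1 X2 X3 HX Hi Hre Himm).
  - intros (-> & -> & Hb); split.
    + exact (immersion_of_not_neg_real b 0 p_infty X1 X2 X3 Hr1 HX Hb).
    + exact (induced_metric_complete_punctured b X1 X2 X3 HX Hb).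
Qed.
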